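(* Let $a,b\in\mathbb{Z}$ with $b$ a perfect square, and suppose $\mathcal{F}(x)=x^8+ax^4+b$ is monogenic. Then $b=1$. Consequently, since the groups 8T11 and 8T22 arise as Galois groups of irreducible $\mathcal{F}$ only when $b$ is a square and $\sqrt b$ is not a square, there is no monogenic $\mathcal{F}(x)$ whose Galois group is 8T11 or 8T22.
   Context: A monic polynomial $f(x)\in\mathbb{Z}[x]$ is monogenic if it is irreducible over $\mathbb{Q}$ and $\mathbb{Z}[\theta]$ is the ring of integers of $\mathbb{Q}(\theta)$, $f(\theta)=0$. 8T$X$ is the $X$-th transitive subgroup of $S_8$ in the standard numbering; 8T11 $\cong C_4\circ D_4$, 8T22 $\cong D_4\circ D_4$. Galois groups are over $\mathbb{Q}$. *)

From mathcomp Require Import all_boot all_order all_algebra all_field.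
Set Implicit Arguments. Unset Strict Implicit. Unset Printing Implicit Defensive.
Import GRing.Theory Num.Theory.
Local Open Scope ring_scope.

Definition Fpoly (a b : int) : {poly int} := 'X^8 + a%:P * 'X^4 + b%:P.

Definition in_Zadj (theta x : algC) : Prop :=
  exists p : {poly int}, x = (map_poly intr p).[theta].

Definition in_Qadj (theta x : algC) : Prop :=
  exists q : {poly rat}, x = (map_poly ratr q).[theta].

Definition in_ring_of_integers (theta x : algC) : Prop :=
  in_Qadj theta x /\ x \in Aint.

Definition monogenic (f : {poly int}) : Prop :=
  [/\ f \is monic,
      irreducible_poly (map_poly intr f : {poly rat}) &
      forall theta : algC, root (map_poly intr f) theta ->
        forall x : algC, in_Zadj theta x <-> in_ring_of_integers theta x].

From mathcomp Require Import all_boot all_order all_algebra all_field.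
From mathcomp Require Import ring.
Set Implicit Arguments.
Unset Strict Implicit.
Unset Printing Implicit Defensive.
Import GRing.Theory Num.Theory.
Local Open Scope ring_scope.

(* If t is a root of x^8 + a x^4 + c^2, then u = t^2 + c/t^2 satisfies u^2 = 2c - a,
   so u is an algebraic integer of Q(t).  As c/t^2 = -(t^6 + a t^2)/c, the
   coordinate of u at t^6 on the power basis 1, t, ..., t^7 is -1/c.  Monogenicity
   makes all these coordinates integers, hence c = +-1 and b = c^2 = 1. *)

Lemma irreducible_coef0_neq0 (F : fieldType) (p : {poly F}) :
  irreducible_poly p -> (2 < size p)%N -> p`_0 != 0.
Proof.
move=> irr_p size_p; apply: contraTneq size_p => p0_eq0.
have X_dvd_p : 'X %| p by rewrite -(subr0 'X) dvdp_XsubCl /root horner_coef0 p0_eq0.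
have X_size : size ('X : {poly F}) != 1%N by rewrite size_polyX.
by rewrite -(eqp_size (irr_p.2 _ X_size X_dvd_p)) size_polyX.
Qed.

Lemma irreducible_horner_map_inj (F : fieldType) (L : idomainType)
    (f : {rmorphism F -> L}) (p g h : {poly F}) (t : L) :
  irreducible_poly p -> root (map_poly f p) t ->
  (size g < size p)%N -> (size h < size p)%N ->
  (map_poly f g).[t] = (map_poly f h).[t] -> g = h.
Proof.
move=> irr_p pt0 size_g size_h eq_gh; apply/eqP; rewrite -subr_eq0.
have size_gh : (size (g - h)%R < size p)%N.
  by apply: leq_ltn_trans (size_polyD _ _) _; rewrite size_polyN gtn_max size_g size_h.
apply: contraTT size_gh => gh_neq0; rewrite -leqNgt.
have gh_t0 : root (map_poly f (g - h)) t.
  by rewrite /root rmorphB hornerD hornerN eq_gh subrr.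
have := root_gcd (map_poly f p) (map_poly f (g - h)) t.
rewrite pt0 gh_t0 -gcdp_map /= => gcd_t0.
have [/eqP/size_poly1P [k k_neq0 gcd_k]|gcd_size] := eqVneq (size (gcdp p (g - h))) 1%N.
  by move: gcd_t0; rewrite gcd_k map_polyC rootC fmorph_eq0 (negbTE k_neq0).
apply: dvdp_leq gh_neq0 _.
by rewrite -(eqp_dvdl _ (irr_p.2 _ gcd_size (dvdp_gcdl p _))) dvdp_gcdr.
Qed.

Lemma horner_map_rmodp (R : nzRingType) (S : comNzRingType) (f : {rmorphism R -> S})
    (d p : {poly R}) (t : S) :
  d \is monic -> root (map_poly f d) t ->
  (map_poly f (Pdiv.CommonRing.rmodp p d)).[t] = (map_poly f p).[t].
Proof.
move=> mon_d dt0; rewrite {2}(Pdiv.RingMonic.rdivp_eq mon_d p) !rmorphD rmorphM /=.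
by rewrite hornerD hornerM (rootP dt0) mulr0 add0r.
Qed.

Lemma Aint_sqr_int (x : algC) (n : int) : x ^+ 2 = n%:~R -> x \in Aint.
Proof.
move=> x2; apply: (@root_monic_Aint ('X^2 - (n%:~R)%:P)).
- by rewrite /root hornerD hornerN hornerXn hornerC x2 subrr.
- exact: monicXnsubC.
- by rewrite polyOverXnsubC intr_int.
Qed.

Lemma sqrz_eq1_of_intr_eqNV (c r : int) :
  c != 0 -> r%:~R = - (c%:~R)^-1 :> rat -> c ^+ 2 = 1.
Proof.
move=> c_neq0 r_eq; have cr : c * r = -1.
  by apply: (@intr_inj rat); rewrite intrM r_eq mulrN mulfV ?intr_eq0.
move/(congr1 absz): cr; rewrite abszM => /eqP; rewrite muln_eq1 => /andP[/eqP c1 _].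
by apply/eqP; rewrite sqr_norm_eq1 -abszE c1.
Qed.

Lemma map_poly_ratr_intr (R : numFieldType) (p : {poly int}) :
  map_poly (ratr : rat -> R) (map_poly intr p) = map_poly intr p.
Proof. by rewrite -map_poly_comp; apply: eq_map_poly => x /=; rewrite ratr_int. Qed.

Section EvenOctic.

Variables (K : fieldType) (a c t : K).
Hypotheses (c_neq0 : c != 0) (t_root : t ^+ 8 + a * t ^+ 4 + c ^+ 2 = 0).

Lemma octic_root_neq0 : t != 0.
Proof.
apply: contra_eq_neq t_root => ->.
by rewrite !expr0n /= mulr0 !add0r sqrf_eq0.
Qed.

Lemma octic_sqr_sum : (t ^+ 2 + c / t ^+ 2) ^+ 2 = 2 * c - a.
Proof.
have t_neq0 := octic_root_neq0.
apply/eqP; rewrite -subr_eq0; apply/eqP.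
transitivity ((t ^+ 8 + a * t ^+ 4 + c ^+ 2) / t ^+ 4); first by field.
by rewrite t_root mul0r.
Qed.

Lemma octic_div_sqr : c / t ^+ 2 = - (c^-1 * (t ^+ 6 + a * t ^+ 2)).
Proof.
have t_neq0 := octic_root_neq0.
apply/eqP; rewrite -subr_eq0; apply/eqP.
transitivity ((t ^+ 8 + a * t ^+ 4 + c ^+ 2) / (c * t ^+ 2)).
  by field; rewrite c_neq0 t_neq0.
by rewrite t_root mul0r.
Qed.

End EvenOctic.

Lemma monogenic_Aint_int_coords (f : {poly int}) (t : algC) (q : {poly rat}) :
  monogenic f -> root (map_poly intr f) t -> (size q < size f)%N ->
  (map_poly ratr q).[t] \in Aint -> exists r : {poly int}, q = map_poly intr r.
Proof.
move=> [mon_f irr_f Zadj_f] ft0 size_q q_Aint.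
have [p p_t] := (Zadj_f t ft0 _).2 (conj (ex_intro _ q erefl) q_Aint).
exists (Pdiv.CommonRing.rmodp p f); symmetry.
apply: (irreducible_horner_map_inj (f := ratr) (t := t) irr_f); rewrite ?size_rat_int_poly //.
- by rewrite map_poly_ratr_intr.
- by rewrite Pdiv.CommonRing.ltn_rmodpN0 ?monic_neq0.
- by rewrite map_poly_ratr_intr horner_map_rmodp // -p_t.
Qed.

Lemma size_Fpoly (a b : int) : size (Fpoly a b) = 9%N.
Proof.
rewrite /Fpoly -addrA size_polyDl size_polyXn //.
apply: leq_ltn_trans (size_polyD _ _) _; rewrite gtn_max.
rewrite (leq_ltn_trans (size_polyC_leq1 _)) // andbT.
apply: leq_ltn_trans (size_polyMleq _ _) _.
rewrite size_polyXn addnS /=.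
by apply: (@leq_ltn_trans (1 + 4)); rewrite ?leq_add2r ?size_polyC_leq1.
Qed.

Lemma horner_map_Fpoly (R : comNzRingType) (a b : int) (t : R) :
  (map_poly intr (Fpoly a b)).[t] = t ^+ 8 + a%:~R * t ^+ 4 + b%:~R.
Proof. by rewrite /Fpoly !rmorphD rmorphM /= !map_polyC !map_polyXn !hornerE. Qed.

Lemma irreducible_Fpoly_neq0 (a b : int) :
  irreducible_poly (map_poly intr (Fpoly a b) : {poly rat}) -> b != 0.
Proof.
move/irreducible_coef0_neq0; rewrite size_rat_int_poly size_Fpoly.
by rewrite -horner_coef0 horner_map_Fpoly !expr0n mulr0 !add0r intr_eq0 => /(_ isT).
Qed.

Definition Upoly (a c : int) : {poly rat} := 'X^2 - (c%:~R)^-1 *: ('X^6 + a%:~R *: 'X^2).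

Lemma size_Upoly (a c : int) : (size (Upoly a c) <= 7)%N.
Proof.
apply: leq_trans (size_polyD _ _) _; rewrite size_polyN geq_max size_polyXn /=.
apply: leq_trans (size_scale_leq _ _) _.
apply: leq_trans (size_polyD _ _) _; rewrite geq_max size_polyXn /=.
by apply: leq_trans (size_scale_leq _ _) _; rewrite size_polyXn.
Qed.

Lemma coef_Upoly6 (a c : int) : (Upoly a c)`_6 = - (c%:~R)^-1.
Proof. by rewrite coefB coefXn coefZ coefD coefXn coefZ coefXn mulr0 addr0 sub0r mulr1. Qed.

Lemma horner_Upoly (L : numFieldType) (a c : int) (t : L) :
  c%:~R != 0 :> L -> t ^+ 8 + a%:~R * t ^+ 4 + c%:~R ^+ 2 = 0 ->
  (map_poly ratr (Upoly a c)).[t] = t ^+ 2 + c%:~R / t ^+ 2.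
Proof.
move=> c_neq0 t_root; rewrite (octic_div_sqr c_neq0 t_root).
rewrite /Upoly rmorphB /= !map_polyZ rmorphD /= map_polyZ !map_polyXn.
by rewrite !(hornerD, hornerN, hornerZ, hornerXn) fmorphV !rmorph_int.
Qed.

Theorem mainTheorem4 (a b : int) :
  (exists c : int, b = c ^+ 2) -> monogenic (Fpoly a b) -> b = 1.
Proof.
move=> [c ->] monF; have [_ /irreducible_Fpoly_neq0 c2_neq0 _] := monF.
have c_neq0 : c != 0 by apply: contraNneq c2_neq0 => ->; rewrite expr0n.
have cC_neq0 : c%:~R != 0 :> algC by rewrite intr_eq0.
have [t Ft] : exists t : algC, root (map_poly intr (Fpoly a (c ^+ 2))) t.
  by apply/closed_rootP; rewrite size_map_inj_poly ?size_Fpoly //; exact: intr_inj.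
have octic_t : t ^+ 8 + a%:~R * t ^+ 4 + c%:~R ^+ 2 = 0 :> algC.
  by rewrite -rmorphXn -horner_map_Fpoly; apply/eqP.
have u_Aint : (map_poly ratr (Upoly a c)).[t] \in Aint.
  apply: (@Aint_sqr_int _ (2 * c - a)).
  by rewrite horner_Upoly // (octic_sqr_sum cC_neq0 octic_t) rmorphB rmorphM.
have size_U : (size (Upoly a c) < size (Fpoly a (c ^+ 2)))%N.
  by rewrite size_Fpoly ltnS (leq_trans (size_Upoly a c)).
have [r U_r] := monogenic_Aint_int_coords monF Ft size_U u_Aint.
apply: (sqrz_eq1_of_intr_eqNV (r := r`_6)) => //.
by rewrite -(coef_Upoly6 a c) U_r coef_map.
Qed.
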